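(* Let $n\ge 3$, let $\mathcal{S}\subseteq(\mathbb{C}^d)^{\otimes n}$ be the permutation-symmetric subspace, and let $X,Y$ be $d\times d$ complex matrices. Suppose $|\psi\rangle\in\mathcal{S}$, $X_{(1)}|\psi\rangle\in\mathcal{S}$ and $Y_{(2)}|\psi\rangle\in\mathcal{S}$. Then $[X_{(1)},Y_{(1)}]|\psi\rangle=0$.
   Context: $\mathcal{S}$ is the set of vectors in $(\mathbb{C}^d)^{\otimes n}$ invariant under all permutations of the $n$ tensor factors. For a $d\times d$ matrix $X$ and $1\le k\le n$, $X_{(k)}$ denotes the operator on $(\mathbb{C}^d)^{\otimes n}$ acting as $X$ on the $k$-th tensor factor and as the identity on all others. $[P,Q]=PQ-QP$. *)

From HB Require Import structures.
From mathcomp Require Import all_boot all_order all_algebra all_fingroup.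
From mathcomp Require Import complex.
From mathcomp Require Import reals.
Set Implicit Arguments. Unset Strict Implicit. Unset Printing Implicit Defensive.
Import Order.TTheory GRing.Theory Num.Theory.
Local Open Scope ring_scope.

Definition multi_index (n d : nat) := {ffun 'I_n -> 'I_d}.

(* Vectors of (K^d)^{(x)n}, in coordinates w.r.t. the product basis. *)
Definition tensor_space (K : Type) (n d : nat) := {ffun multi_index n d -> K}.

Definition set_index (n d : nat) (i : multi_index n d) (k : 'I_n) (j : 'I_d)
  : multi_index n d := [ffun m => if m == k then j else i m].

Definition perm_index (n d : nat) (s : 'S_n) (i : multi_index n d)
  : multi_index n d := [ffun m => i (s m)].

Definition in_sym_subspace (K : Type) (n d : nat) (psi : tensor_space K n d) : Prop :=
  forall (s : 'S_n) (i : multi_index n d), psi (perm_index s i) = psi i.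

Definition act_on (K : nzRingType) (n d : nat) (k : 'I_n) (X : 'M[K]_d)
  (psi : tensor_space K n d) : tensor_space K n d :=
  [ffun i : multi_index n d => \sum_(j < d) X (i k) j * psi (set_index i k j)].

(* Symmetry of psi and of Y_(2) psi under the swap of the first two factors gives
   Y_(1) psi = Y_(2) psi; likewise X_(1) psi = X_(3) psi. Operators on distinct
   factors commute, so
   X_(1) Y_(1) psi = Y_(2) X_(1) psi = Y_(2) X_(3) psi = X_(3) Y_(1) psi
                   = Y_(1) X_(3) psi = Y_(1) X_(1) psi. *)
From HB Require Import structures.
From mathcomp Require Import all_boot all_order all_algebra all_fingroup.
From mathcomp Require Import complex.
From mathcomp Require Import reals.
Import GRing.Theory.
Local Open Scope ring_scope.

Lemma perm_set_index (n d : nat) (s : 'S_n) (i : multi_index n d) (l : 'I_n)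
    (j : 'I_d) :
  perm_index s (set_index i l j) = set_index (perm_index s i) ((s^-1)%g l) j.
Proof. by apply/ffunP=> m; rewrite !ffunE (canF_eq (permK s)). Qed.

Lemma set_indexC (n d : nat) (i : multi_index n d) (k l : 'I_n) (a b : 'I_d) :
  k != l -> set_index (set_index i k a) l b = set_index (set_index i l b) k a.
Proof.
move=> neq_kl; apply/ffunP=> m; rewrite !ffunE.
by case: (m =P l) => [->|//]; rewrite eq_sym (negbTE neq_kl).
Qed.

Section ActOn.
Context {K : comNzRingType} {n d : nat}.
Implicit Types (psi : tensor_space K n d) (X Y : 'M[K]_d) (k l : 'I_n).

Lemma act_on_perm_index psi (s : 'S_n) k X (i : multi_index n d) :
  in_sym_subspace psi ->
  act_on k X psi (perm_index s i) = act_on (s k) X psi i.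
Proof.
move=> sym_psi; rewrite !ffunE /=; apply: eq_bigr => j _.
by rewrite -[k in set_index _ k j](permK s) -perm_set_index sym_psi.
Qed.

Lemma act_on_sym_perm psi (s : 'S_n) k X :
  in_sym_subspace psi -> in_sym_subspace (act_on k X psi) ->
  act_on (s k) X psi = act_on k X psi.
Proof.
move=> sym_psi sym_Xpsi; apply/ffunP=> i.
by rewrite -act_on_perm_index // sym_Xpsi.
Qed.

Lemma act_onC psi k l X Y : k != l ->
  act_on k X (act_on l Y psi) = act_on l Y (act_on k X psi).
Proof.
move=> neq_kl; apply/ffunP=> i; rewrite !ffunE.
under eq_bigr => a _ do rewrite ffunE big_distrr.
rewrite exchange_big /=; apply: eq_bigr => b _.
rewrite ffunE big_distrr; apply: eq_bigr => a _.
rewrite /= !ffunE (eq_sym l k) (negbTE neq_kl) set_indexC //.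
by rewrite !mulrA (mulrC (X _ _)).
Qed.

Lemma act_on_commute_sym {psi} {k1 k2 k3 : 'I_n} {X Y} :
  k1 != k2 -> k1 != k3 -> k2 != k3 ->
  in_sym_subspace psi ->
  in_sym_subspace (act_on k1 X psi) -> in_sym_subspace (act_on k2 Y psi) ->
  act_on k1 X (act_on k1 Y psi) = act_on k1 Y (act_on k1 X psi).
Proof.
move=> n12 n13 n23 sym_psi sym_Xpsi sym_Ypsi.
have Y12 : act_on k1 Y psi = act_on k2 Y psi.
  by rewrite -(tpermR k1 k2) act_on_sym_perm.
have X13 : act_on k1 X psi = act_on k3 X psi.
  by rewrite -(tpermL k1 k3) act_on_sym_perm.
rewrite {1}Y12 act_onC // X13 -act_onC 1?eq_sym //.
by rewrite -Y12 act_onC // eq_sym.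
Qed.

End ActOn.

Theorem lemma3 (R : realType) (n d : nat) (hn : (3 <= n)%N)
  (k1 k2 : 'I_n) (hk1 : nat_of_ord k1 = 0%N) (hk2 : nat_of_ord k2 = 1%N)
  (X Y : 'M[R[i]]_d) (psi : tensor_space R[i] n d) :
  in_sym_subspace psi ->
  in_sym_subspace (act_on k1 X psi) ->
  in_sym_subspace (act_on k2 Y psi) ->
  act_on k1 X (act_on k1 Y psi) - act_on k1 Y (act_on k1 X psi) = 0.
Proof.
move=> sym_psi sym_Xpsi sym_Ypsi.
pose k3 : 'I_n := Ordinal hn.
have n12 : k1 != k2 by rewrite -val_eqE /= hk1 hk2.
have n13 : k1 != k3 by rewrite -val_eqE /= hk1.
have n23 : k2 != k3 by rewrite -val_eqE /= hk2.
by rewrite (act_on_commute_sym n12 n13 n23) ?subrr.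
Qed.
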